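(* Let $k$ be a field of characteristic $p>2$ ($p$ prime) and let $m\ge1$. Then for any $i$ with $1\le i\le 2m$, $$w_m(x_1,x_2,\ldots,x_ix_{2m+1},\ldots,x_{2m})\in\{x_0^pw_j\mid j\ge0\}^{S_0}+T(G),$$ while for any $\alpha\in k$, $$w_m(x_1,x_2,\ldots,\alpha x_i,\ldots,x_{2m})=\alpha^pw_m(x_1,x_2,\ldots,x_i,\ldots,x_{2m}).$$
   Context: $X=\{x_i\mid i\ge0\}$ countably infinite; $k_1\langle X\rangle$ (resp. $k_0\langle X\rangle\subseteq k_1\langle X\rangle$) the free unitary (resp. nonunitary) associative $k$-algebra on $X$. $[a,b]=ab-ba$. $H^{S_0}$ is the smallest subspace of $k_0\langle X\rangle$ containing $H$ and invariant under all endomorphisms of $k_0\langle X\rangle$. $G$ is the infinite-dimensional unitary Grassmann algebra over $k$ (basis $1$ and the products $e_{i_1}\cdots e_{i_n}$, $n\ge1$, $i_1<\dots<i_n$, with $e_ie_j=-e_je_i$, $e_i^2=0$); $T(G)$ is the set of $f\in k_1\langle X\rangle$ in the kernel of every unitary homomorphism $k_1\langle X\rangle\to G$. $\kappa(u,v)=[u,v]u^{p-1}v^{p-1}$, $w_m=\prod_{r=1}^m\kappa(x_{2r-1},x_{2r})$ for $m\ge1$, $w_0=1$, and $w_m(u_1,\ldots,u_{2m})$ is the image of $w_m$ under $x_j\mapsto u_j$ ($1\le j\le 2m$); in the displayed expressions only the $i$-th argument is changed. *)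

From HB Require Import structures.
From mathcomp Require Import all_boot all_order all_algebra.
From mathcomp Require Import finmap.
From mathcomp.multinomials Require Import monalg.

Set Implicit Arguments.
Unset Strict Implicit.
Unset Printing Implicit Defensive.

Import Order.TTheory GRing.Theory Num.Theory.
Local Open Scope ring_scope.

Section FreeAlg.
Variable k : fieldType.

(* k_1<X> : the free unitary associative k-algebra on X = {x_i | i >= 0},
   realised as the monoid algebra of the free monoid on nat. *)
Definition FA : Type := {malg k[{fmonom nat}]}.

Definition xv (i : nat) : FA := << fmu i >>.

(* k_0<X> : the nonunitary free algebra = elements with zero coefficient on
   the empty word (span of the nonempty words). *)
Definition in_k0 (f : FA) : Prop := f@_(fmone nat) = 0.

(* k-algebra endomorphisms of the (nonunitary) algebra k_0<X>; only the
   behaviour on k_0<X> matters. *)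
Definition is_endo0 (phi : FA -> FA) : Prop :=
  [/\ (forall f, in_k0 f -> in_k0 (phi f)),
      (forall f g, in_k0 f -> in_k0 g -> phi (f + g) = phi f + phi g),
      (forall (a : k) f, in_k0 f -> phi (a *: f) = a *: phi f) &
      (forall f g, in_k0 f -> in_k0 g -> phi (f * g) = phi f * phi g)].

Definition is_subspace0 (V : FA -> Prop) : Prop :=
  [/\ (forall f, V f -> in_k0 f), V 0,
      (forall f g, V f -> V g -> V (f + g)) &
      (forall (a : k) f, V f -> V (a *: f))].

(* H^{S_0}: the smallest subspace of k_0<X> containing H and invariant under
   all endomorphisms of k_0<X> (intersection of all such subspaces). *)
Definition S0closure (H : FA -> Prop) (f : FA) : Prop :=
  forall V : FA -> Prop, is_subspace0 V ->
    (forall h, H h -> V h) ->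
    (forall phi, is_endo0 phi -> forall g, V g -> V (phi g)) ->
    V f.

(* ---- The infinite-dimensional unitary Grassmann algebra G over k ----
   Basis: e_S for S a finite subset of nat (e_{fset0} = 1, and
   e_S = e_{i_1} ... e_{i_n} for S = {i_1 < ... < i_n}). *)
Definition Grass : Type := {malg k[{fset nat}]}.

Definition ginv (A B : {fset nat}) : nat :=
  (\sum_(a <- A) \sum_(b <- B) (b < a))%N.

Definition gsign (A B : {fset nat}) : k :=
  if [disjoint A & B]%fset then (-1) ^+ ginv A B else 0.

Definition gone : Grass := << fset0 >>.

Definition gmul (f g : Grass) : Grass :=
  \sum_(A <- msupp f) \sum_(B <- msupp g)
     << (f@_A * g@_B * gsign A B) *g (A `|` B)%fset >>.

Definition is_unital_hom_G (psi : FA -> Grass) : Prop :=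
  [/\ (forall f g, psi (f + g) = psi f + psi g),
      (forall (a : k) f, psi (a *: f) = a *: psi f),
      (forall f g, psi (f * g) = gmul (psi f) (psi g)) &
      psi 1 = gone].

Definition TG (f : FA) : Prop :=
  forall psi, is_unital_hom_G psi -> psi f = 0.

Definition kappa (p : nat) (u v : FA) : FA :=
  (u * v - v * u) * u ^+ p.-1 * v ^+ p.-1.

Definition wm (p m : nat) (u : nat -> FA) : FA :=
  \prod_(1 <= r < m.+1) kappa p (u (2 * r).-1) (u (2 * r)).

Definition w (p m : nat) : FA := wm p m xv.

End FreeAlg.

(* In the Grassmann algebra G over a field of characteristic p > 2 every
   element is the sum of an even part, which is central, and an odd part; odd
   parts anticommute and square to zero.  Hence every p-th power is central
   and kappa(u, v) = 2 u1 v1 u0^(p-1) v0^(p-1) (u0, u1 the even and odd parts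
   of u), which yields kappa(a b, v) = a^p kappa(b, v) + b^p kappa(a, v) and
   its mirror image.  As w_m is a product of kappa's, substituting
   x_i x_(2m+1) for x_i gives, modulo T(G),
   x_i^p w_m(.., x_(2m+1), ..) + x_(2m+1)^p w_m, and both summands are images
   of x_0^p w_m under renamings of the variables.  Homogeneity is the same
   computation with the central factor alpha in place of x_(2m+1). *)

From HB Require Import structures.
From mathcomp Require Import all_boot all_order all_algebra.
From mathcomp Require Import finmap.
From mathcomp.multinomials Require Import monalg.
From mathcomp Require Import ring zify.
Import GRing.Theory.
Set Implicit Arguments.
Unset Strict Implicit.
Unset Printing Implicit Defensive.
Local Open Scope ring_scope.

Definition fupd (T : Type) (u : nat -> T) (i : nat) (y : T) : nat -> T :=
  fun j => if j == i then y else u j.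

Lemma fupd_id (T : Type) (u : nat -> T) i : fupd u i (u i) =1 u.
Proof. by move=> j; rewrite /fupd; case: eqP => [->|]. Qed.

Lemma comp_fupd (T U : Type) (f : T -> U) (u : nat -> T) i y :
  f \o fupd u i y =1 fupd (f \o u) i (f y).
Proof. by move=> j; rewrite /fupd /=; case: eqP. Qed.

Lemma pair_index (i m : nat) : (1 <= i <= 2 * m)%N ->
  exists2 r0, (1 <= r0 <= m)%N & (i = (2 * r0).-1 \/ i = 2 * r0)%N.
Proof.
move=> hi; exists (uphalf i); have := odd_double_half i; rewrite uphalf_half.
  by case: (odd i) => /=; lia.
by case: (odd i) => /= h; [left|right]; lia.
Qed.

(* [wprod] is locked: otherwise matching a ring operation against it unfolds
   the big product and unification diverges. *)
Fact wprod_key : unit. Proof. exact: tt. Qed.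

Section RingProducts.
Variable R : ringType.
Implicit Types (a b x y z : R) (u v : nat -> R).

Definition central x := forall y, x * y = y * x.

Lemma centralX x n : central x -> central (x ^+ n).
Proof. by move=> cx y; apply/esym/commrX; rewrite /GRing.comm cx. Qed.

Lemma centralM x y : central x -> central y -> central (x * y).
Proof. by move=> cx cy z; rewrite -mulrA cy mulrA cx mulrA. Qed.

Lemma centralCA c x y : central c -> x * (c * y) = c * (x * y).
Proof. by move=> cc; rewrite mulrA -cc mulrA. Qed.

Lemma exprD_sqr0 x y n : x * y = y * x -> y * y = 0 ->
  (x + y) ^+ n.+1 = x ^+ n.+1 + x ^+ n * y *+ n.+1.
Proof.
move=> cxy yy0; elim: n => [|n IHn]; first by rewrite expr1 expr0 mul1r.
rewrite exprSr IHn mulrDl !mulrDr -exprSr !mulrnAl -[_ * y * y]mulrA yy0.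
by rewrite mulr0 mul0rn addr0 -[_ * y * x]mulrA -cxy mulrA -exprSr -addrA -mulrS.
Qed.

Lemma prodr_nat_lincomb_at (F F1 F2 : nat -> R) a b r0 n :
  central a -> central b -> (1 <= r0 < n)%N ->
  (forall r, r != r0 -> F r = F1 r) -> (forall r, r != r0 -> F r = F2 r) ->
  F r0 = a * F1 r0 + b * F2 r0 ->
  \prod_(1 <= r < n) F r =
    a * \prod_(1 <= r < n) F1 r + b * \prod_(1 <= r < n) F2 r.
Proof.
move=> ca cb /andP[r0_gt0 r0_lt] F1E F2E F0E.
have eq_below G : (forall r, r != r0 -> F r = G r) -> forall n', (n' <= r0)%N ->
    \prod_(1 <= r < n') F r = \prod_(1 <= r < n') G r.
  move=> GE n' le_n'; apply: eq_big_nat => r /andP[_ lt_r]; apply: GE.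
  by rewrite neq_ltn (leq_trans lt_r le_n').
elim: n r0_lt => [//|n IHn] r0_lt; rewrite !big_nat_recr ?(leq_trans r0_gt0) //=.
have [<-|ne] := eqVneq r0 n.
  rewrite -(eq_below _ F2E) // (eq_below _ F1E) // F0E.
  by rewrite mulrDr !mulrA -ca -cb.
rewrite IHn; last by rewrite ltn_neqAle ne -ltnS.
by rewrite mulrDl -!mulrA -(F1E n) ?(F2E n) // eq_sym.
Qed.

Variable p : nat.

Definition kap x y := (x * y - y * x) * x ^+ p.-1 * y ^+ p.-1.

Definition wprod (m : nat) u :=
  locked_with wprod_key (\prod_(1 <= r < m.+1) kap (u (2 * r).-1) (u (2 * r))).

Lemma wprodE m u : wprod m u = \prod_(1 <= r < m.+1) kap (u (2 * r).-1) (u (2 * r)).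
Proof. by rewrite /wprod unlock. Qed.

Lemma eq_wprod m u v : (forall j, (0 < j)%N -> u j = v j) -> wprod m u = wprod m v.
Proof.
by move=> uv; rewrite !wprodE; apply: eq_big_nat => r /andP[r_gt0 _]; rewrite !uv //; lia.
Qed.

Lemma wprod_upd_lincomb m u i y a b y1 y2 : (1 <= i <= 2 * m)%N ->
  central a -> central b ->
  (forall x, kap y x = a * kap y1 x + b * kap y2 x) ->
  (forall x, kap x y = a * kap x y1 + b * kap x y2) ->
  wprod m (fupd u i y) = a * wprod m (fupd u i y1) + b * wprod m (fupd u i y2).
Proof.
move=> /pair_index[r0 r0_in i_r0] ca cb kapyl kapyr.
rewrite !wprodE; apply: (prodr_nat_lincomb_at (r0 := r0)) => //.
- by move=> r ne; rewrite /fupd; do 2 case: eqP => //; lia.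
- by move=> r ne; rewrite /fupd; do 2 case: eqP => //; lia.
rewrite /fupd; case: i_r0 => ->.
  by rewrite eqxx; case: eqP; [lia|].
by rewrite eqxx; case: eqP; [lia|].
Qed.

Lemma wprod_upd_scale m u i y a y1 : (1 <= i <= 2 * m)%N -> central a ->
  (forall x, kap y x = a * kap y1 x) -> (forall x, kap x y = a * kap x y1) ->
  wprod m (fupd u i y) = a * wprod m (fupd u i y1).
Proof.
move=> i_in ca kapyl kapyr.
transitivity (a * wprod m (fupd u i y1) + 0 * wprod m (fupd u i y1)).
  apply: wprod_upd_lincomb => // [z|x|x]; first by rewrite mul0r mulr0.
    by rewrite kapyl mul0r addr0.
  by rewrite kapyr mul0r addr0.
by rewrite mul0r addr0.
Qed.

Hypothesis p_gt0 : (0 < p)%N.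

Lemma kap_centralMl z x y : central z -> kap (z * x) y = z ^+ p * kap x y.
Proof.
move=> cz; rewrite /kap (exprMn_comm _ (cz x)).
have -> : z * x * y - y * (z * x) = z * (x * y - y * x) by rewrite mulrBr !mulrA -cz.
by rewrite mulrA -(centralX _ cz (z * _)) !mulrA -exprSr prednK.
Qed.

Lemma kap_centralMr z x y : central z -> kap x (z * y) = z ^+ p * kap x y.
Proof.
move=> cz; rewrite /kap (exprMn_comm _ (cz y)).
have -> : x * (z * y) - z * y * x = z * (x * y - y * x) by rewrite mulrBr !mulrA -cz.
by rewrite mulrA -(centralX _ cz (z * _ * _)) !mulrA -exprSr prednK.
Qed.

End RingProducts.

Section Morphisms.
Variables (R S : ringType) (f : R -> S) (p : nat).
Hypotheses (fM : {morph f : x y / x * y}) (f1 : f 1 = 1) (fB : {morph f : x y / x - y}).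

Lemma morphX x n : f (x ^+ n) = f x ^+ n.
Proof. by elim: n => [|n IHn]; rewrite ?expr0 // !exprS fM IHn. Qed.

Lemma wprod_morph m u : f (wprod p m u) = wprod p m (f \o u).
Proof.
rewrite !wprodE (big_morph f fM f1); apply: eq_bigr => r _.
by rewrite /kap !fM fB !fM !morphX.
Qed.

End Morphisms.

Lemma pchar_mulrn2_eq0 (R : ringType) (p : nat) (x : R) :
  p \in [pchar R] -> (2 < p)%N -> x *+ 2 = 0 -> x = 0.
Proof.
move=> charp p_gt2 x2; have p_odd : odd p.
  by apply: contraLR p_gt2 => /(prime_oddPn (pcharf_prime charp)) ->.
have xp : x *+ p = 0 by rewrite -mulr_natr (pcharf0 charp) mulr0.
have p1E : p.+1 = (2 * (p.+1)./2)%N by rewrite -[in LHS](odd_double_half p.+1) /= p_odd -mul2n.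
by rewrite -[x](addKr (x *+ p)) -mulrSr p1E mulrnA x2 mul0rn xp oppr0 addr0.
Qed.

Section SuperCommutative.
Variables (R : ringType) (p : nat) (ev od : R -> R).
Hypothesis ev_add_od : forall x, ev x + od x = x.
Hypothesis ev_central : forall x, central (ev x).
Hypothesis od_anticomm : forall x y, od x * od y = - (od y * od x).
Hypothesis evM : forall x y, ev (x * y) = ev x * ev y + od x * od y.
Hypothesis odM : forall x y, od (x * y) = ev x * od y + od x * ev y.
Hypothesis charp : p \in [pchar R].
Hypothesis p_gt2 : (2 < p)%N.
Implicit Types x y z : R.
Local Notation kap := (kap p).

Lemma od_sqr x : od x * od x = 0.
Proof.
by apply: (pchar_mulrn2_eq0 charp p_gt2); rewrite mulr2n {1}od_anticomm addNr.
Qed.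

Lemma od_od_od x y : od x * od y * od x = 0.
Proof. by rewrite -mulrA od_anticomm mulrN mulrA od_sqr mul0r oppr0. Qed.

Lemma od_rot x y z : od x * od y * od z = od y * od z * od x.
Proof.
rewrite (od_anticomm x y) mulNr -[od y * od x * od z]mulrA (od_anticomm x z).
by rewrite mulrN opprK mulrA.
Qed.

Lemma expr_p_ev x : x ^+ p = ev x ^+ p.
Proof.
have frob : (ev x + od x) ^+ p = ev x ^+ p + od x ^+ p.
  by have := pFrobenius_autD_comm charp (ev_central x (od x)); rewrite !pFrobenius_autE.
have od_p : od x ^+ p = 0.
  by case: p p_gt2 => [|[|[|q]]] // _; rewrite exprS mulrA od_sqr mul0r.
by rewrite -{1}(ev_add_od x) frob od_p addr0.
Qed.

Lemma central_expr_p x : central (x ^+ p).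
Proof. by rewrite expr_p_ev; apply/centralX. Qed.

Lemma commr_ev_od x y : x * y - y * x = od x * od y *+ 2.
Proof.
have addKB (a b c : R) : (a + b) - (a + c) = b - c by rewrite (addrC a b) addrKA.
rewrite -[in LHS](ev_add_od x) mulrDl mulrDr ev_central addKB.
rewrite -[in LHS](ev_add_od y) mulrDl mulrDr (ev_central y (od x)) addKB.
by rewrite (od_anticomm y x) opprK mulr2n.
Qed.

Let p_pred : p.-1 = p.-2.+1. Proof. by case: (p) p_gt2 => [|[|n]]. Qed.

(* Only the lowest term of (ev x + od x)^(p-1) survives next to the square-zero od x. *)
Lemma kap_ev_od x y : kap x y = od x * od y * ev x ^+ p.-1 * ev y ^+ p.-1 *+ 2.
Proof.
have expr_ev_od z : z ^+ p.-1 = ev z ^+ p.-1 + ev z ^+ p.-2 * od z *+ p.-1.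
  by rewrite -{1}(ev_add_od z) p_pred exprD_sqr0 // ?od_sqr ?ev_central.
have od_ev_od : od x * od y * (ev x ^+ p.-2 * od x) = 0.
  by rewrite mulrA -(centralX _ (ev_central x)) -mulrA od_od_od mulr0.
have ev_od_od : od x * od y * ev x ^+ p.-1 * (ev y ^+ p.-2 * od y) = 0.
  rewrite -(centralX _ (ev_central x) (od x * od y)) (centralX _ (ev_central y) (od y)).
  by rewrite -!mulrA (mulrA (od y) (od y)) od_sqr mul0r !mulr0.
rewrite /kap commr_ev_od (expr_ev_od x) (expr_ev_od y) !mulrnAl; congr (_ *+ 2).
rewrite [od x * od y * _]mulrDr mulrnAr od_ev_od mul0rn addr0.
by rewrite mulrDr mulrnAr ev_od_od mul0rn addr0.
Qed.

Lemma kapC x y : kap y x = - kap x y.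
Proof.
rewrite !kap_ev_od (od_anticomm y x) -mulrA (centralX _ (ev_central y)) mulrA.
by rewrite !mulNr mulNrn.
Qed.

Lemma kapMl x z y : kap (x * z) y = x ^+ p * kap z y + z ^+ p * kap x y.
Proof.
rewrite !kap_ev_od odM evM (expr_p_ev x) (expr_p_ev z) !mulrnAr -mulrnDl; congr (_ *+ 2).
set X := ev x; set Z := ev z; set x1 := od x; set z1 := od z; set y1 := od y.
have cX : central X by exact: ev_central.
have cZ : central Z by exact: ev_central.
have cXZ : central (X * Z) by exact: centralM.
have expr_XZ : (X * Z + x1 * z1) ^+ p.-1 = (X * Z) ^+ p.-1 + (X * Z) ^+ p.-2 * (x1 * z1) *+ p.-1.
  by rewrite p_pred exprD_sqr0 // mulrA od_od_od mul0r.
have T1 : X * z1 * y1 * (x1 * z1) = 0.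
  rewrite -mulrA (mulrA y1) (od_rot y x z) -(mulrA X) (mulrA z1) (mulrA z1 x1).
  by rewrite od_od_od mul0r mulr0.
have T2 : x1 * Z * y1 * (x1 * z1) = 0.
  by rewrite -(cZ x1) -!mulrA (mulrA y1) (mulrA x1) (mulrA x1 y1) od_od_od mul0r mulr0.
rewrite expr_XZ [(X * z1 + x1 * Z) * y1 * _]mulrDr mulrnAr.
rewrite (centralX _ cXZ (x1 * z1)) mulrA !mulrDl T1 T2 !mul0r addr0 mul0rn mul0r addr0.
have pE : p = p.-1.+1 by rewrite prednK // (ltn_trans _ p_gt2).
rewrite (exprMn_comm _ (cX Z)) -!mulrA; congr (_ + _).
  by rewrite !(centralCA _ _ (centralX _ cX)) mulrA -exprSr -pE.
by rewrite !(centralCA _ _ (centralX _ cZ)) (centralCA _ _ cZ) mulrA -exprSr -pE.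
Qed.

Lemma kapMr x z y : kap y (x * z) = x ^+ p * kap y z + z ^+ p * kap y x.
Proof.
rewrite (kapC (x * z)) kapMl opprD -(mulrN (x ^+ p)) -(mulrN (z ^+ p)).
by rewrite -(kapC z) -(kapC x).
Qed.

Lemma wprod_updM m u i y z : (1 <= i <= 2 * m)%N ->
  wprod p m (fupd u i (y * z)) =
    y ^+ p * wprod p m (fupd u i z) + z ^+ p * wprod p m (fupd u i y).
Proof.
move=> i_in; apply: wprod_upd_lincomb => //;
  [exact: central_expr_p | exact: central_expr_p | exact: kapMl | exact: kapMr].
Qed.

Variables (A : ringType) (f : A -> R).
Hypotheses (fD : {morph f : a b / a + b}) (fM : {morph f : a b / a * b}).
Hypotheses (f1 : f 1 = 1) (fB : {morph f : a b / a - b}).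

(* Stated under [f] so that all rewriting takes place in the abstract rings. *)
Lemma morph_wprod_updM m (u : nat -> A) i (a b : A) : (1 <= i <= 2 * m)%N ->
  f (wprod p m (fupd u i (a * b))) =
    f (a ^+ p * wprod p m (fupd u i b) + b ^+ p * wprod p m (fupd u i a)).
Proof.
move=> i_in; rewrite fD !fM !(morphX fM f1) !(wprod_morph p fM f1 fB).
by rewrite !(eq_wprod _ _ (fun j _ => comp_fupd f u i _ j)) fM wprod_updM.
Qed.

End SuperCommutative.

Section GrassmannProduct.
Variable k : fieldType.
Local Notation G := (Grass k).
Local Notation gsign := (gsign k).
Local Open Scope fset_scope.
Local Open Scope ring_scope.
Implicit Types (f g h : G) (A B C : {fset nat}).

Lemma gmulE_supp (d1 d2 : {fset {fset nat}}) f g :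
  msupp f `<=` d1 -> msupp g `<=` d2 ->
  gmul f g = \sum_(A <- d1) \sum_(B <- d2) << f@_A * g@_B * gsign A B *g A `|` B >>.
Proof.
move=> le_d1 le_d2; rewrite /gmul (big_fset_incl _ le_d1) /=.
  apply/eq_bigr=> A _; apply/big_fset_incl => // B _ /mcoeff_outdom ->.
  by rewrite mulr0 mul0r monalgU0.
move=> A _ /mcoeff_outdom fA0.
by rewrite big1 => // B _; rewrite fA0 !mul0r monalgU0.
Qed.

Lemma gmulDl f1 f2 g : gmul (f1 + f2) g = gmul f1 g + gmul f2 g.
Proof.
rewrite !(@gmulE_supp (msupp f1 `|` msupp f2) (msupp g)) ?fsubsetUl ?fsubsetUr ?msuppD_le //.
rewrite -big_split /=; apply/eq_bigr=> A _; rewrite -big_split /=; apply/eq_bigr=> B _.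
by rewrite mcoeffD !mulrDl monalgUD.
Qed.

Lemma gmulDr f g1 g2 : gmul f (g1 + g2) = gmul f g1 + gmul f g2.
Proof.
rewrite !(@gmulE_supp (msupp f) (msupp g1 `|` msupp g2)) ?fsubsetUl ?fsubsetUr ?msuppD_le //.
rewrite -big_split /=; apply/eq_bigr=> A _; rewrite -big_split /=; apply/eq_bigr=> B _.
by rewrite mcoeffD mulrDr mulrDl monalgUD.
Qed.

Lemma gmul0f f : gmul 0 f = 0.
Proof. by rewrite /gmul msupp0 big_seq_fset0. Qed.

Lemma gmulf0 f : gmul f 0 = 0.
Proof. by rewrite /gmul msupp0; apply: big1 => A _; rewrite big_seq_fset0. Qed.

Lemma gmulUg c A g :
  gmul << c *g A >> g = \sum_(B <- msupp g) << c * g@_B * gsign A B *g A `|` B >>.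
Proof.
rewrite (@gmulE_supp [fset A] (msupp g)) ?msuppU_le // big_seq_fset1.
by apply/eq_bigr => B _; rewrite mcoeffUU.
Qed.

Lemma gmulgU c B g :
  gmul g << c *g B >> = \sum_(A <- msupp g) << g@_A * c * gsign A B *g A `|` B >>.
Proof.
rewrite (@gmulE_supp (msupp g) [fset B]) ?msuppU_le //.
by apply/eq_bigr => A _; rewrite big_seq_fset1 mcoeffUU.
Qed.

Lemma gmulUU c1 c2 A B :
  gmul << c1 *g A >> << c2 *g B >> = << c1 * c2 * gsign A B *g A `|` B >>.
Proof. by rewrite (@gmulE_supp [fset A] [fset B]) ?msuppU_le // !big_seq_fset1 !mcoeffUU. Qed.

Lemma gmul_sumUl f g : gmul f g = \sum_(A <- msupp f) gmul << f@_A *g A >> g.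
Proof. by apply/eq_bigr=> A _; rewrite gmulUg. Qed.

Lemma gmul_sumUr f g : gmul f g = \sum_(B <- msupp g) gmul f << g@_B *g B >>.
Proof. by rewrite [LHS]/gmul exchange_big; apply/eq_bigr=> B _; rewrite gmulgU. Qed.

Lemma perm_fsetU A B : [disjoint A & B] -> perm_eq (A `|` B) (A ++ B).
Proof.
move=> dAB; apply: uniq_perm; first exact: fset_uniq.
  rewrite cat_uniq !fset_uniq /= andbT; apply/hasPn => x xB.
  by apply/negP => xA; move/fdisjointP: dAB => /(_ x xA); rewrite xB.
by move=> x; rewrite mem_cat in_fsetU.
Qed.

Lemma ginvUl A B C : [disjoint A & B] -> ginv (A `|` B) C = (ginv A C + ginv B C)%N.
Proof. by move=> dAB; rewrite /ginv (perm_big _ (perm_fsetU dAB)) big_cat. Qed.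

Lemma ginvUr A B C : [disjoint B & C] -> ginv A (B `|` C) = (ginv A B + ginv A C)%N.
Proof.
move=> dBC; rewrite /ginv -big_split /=; apply: eq_bigr => a _.
by rewrite (perm_big _ (perm_fsetU dBC)) big_cat.
Qed.

Lemma gsignA A B C : gsign A B * gsign (A `|` B) C = gsign B C * gsign A (B `|` C).
Proof.
rewrite /gsign fdisjointUX fdisjointXU.
case dAB: [disjoint A & B]; case dAC: [disjoint A & C]; case dBC: [disjoint B & C] => /=;
  rewrite ?mul0r ?mulr0 //.
by rewrite ginvUl // ginvUr // !exprD; ring.
Qed.

Lemma ginvC A B : [disjoint A & B] -> (ginv A B + ginv B A)%N = (#|` A| * #|` B|)%N.
Proof.
move=> dAB; rewrite /ginv [X in (_ + X)%N]exchange_big -big_split /=.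
have -> : (#|` A| * #|` B| = \sum_(a <- A) \sum_(b <- B) 1)%N.
  under [RHS]eq_bigr do rewrite sum1_size.
  by rewrite big_const_seq count_predT iter_addn_0 mulnC.
rewrite big_seq [RHS]big_seq; apply: eq_bigr => a aA.
rewrite -big_split /= big_seq [RHS]big_seq; apply: eq_bigr => b bB.
have : b != a by apply: contraTneq bB => ->; move/fdisjointP: dAB => /(_ a aA).
by case: ltngtP.
Qed.

Lemma gsignC A B : gsign A B = (-1) ^+ (#|` A| * #|` B|) * gsign B A.
Proof.
rewrite /gsign fdisjoint_sym; case dBA: [disjoint B & A]; last by rewrite mulr0.
rewrite fdisjoint_sym in dBA.
rewrite -(ginvC dBA) -signr_odd -[in RHS]signr_odd -[X in _ * X]signr_odd.
by rewrite oddD -signr_addb; case: (odd _); case: (odd _).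
Qed.

Lemma gsign0l A : gsign fset0 A = 1.
Proof. by rewrite /gsign fdisjoint0X /ginv big_seq_fset0. Qed.

Lemma gsign0r A : gsign A fset0 = 1.
Proof. by rewrite /gsign fdisjointX0 /ginv big1 // => a _; rewrite big_seq_fset0. Qed.

Lemma gmulA : associative (@gmul k).
Proof.
have gmulr_sum := big_morph (gmul _) (gmulDr _) (gmulf0 _).
have gmull_sum g := big_morph (fun f => gmul f g) (fun f1 f2 => gmulDl f1 f2 g) (gmul0f g).
move=> g1 g2 g3; rewrite [RHS]gmull_sum gmul_sumUl; apply/eq_bigr=> A _.
rewrite gmulr_sum gmull_sum; apply/eq_bigr=> B _.
rewrite gmulr_sum gmul_sumUr; apply/eq_bigr=> C _.
rewrite !gmulUU fsetUA; congr (<< _ *g _ >>).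
transitivity (g1@_A * g2@_B * g3@_C * (gsign B C * gsign A (B `|` C))); first by ring.
by rewrite -gsignA; ring.
Qed.

Lemma gmul1f : left_id (gone k) (@gmul k).
Proof.
move=> g; rewrite /gone gmulUg [RHS]monalgE.
by apply/eq_bigr=> B _; rewrite mul1r gsign0l mulr1 fset0U.
Qed.

Lemma gmulf1 : right_id (gone k) (@gmul k).
Proof.
move=> g; rewrite /gone gmulgU [RHS]monalgE.
by apply/eq_bigr=> A _; rewrite mulr1 gsign0r mulr1 fsetU0.
Qed.

Lemma gone_neq0 : gone k != 0.
Proof. by apply/eqP/malgP=> /(_ fset0) /eqP; rewrite /gone !mcoeffsE oner_eq0. Qed.

End GrassmannProduct.

(* The ring structure on [grass k] uses a locked copy of [gmul], for the same
   reason as [wprod]. *)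
Fact gmul_key : unit. Proof. exact: tt. Qed.
Definition gmul_locked (k : fieldType) : Grass k -> Grass k -> Grass k :=
  locked_with gmul_key (@gmul k).

Section GrassmannRing.
Variable k : fieldType.

Lemma gmul_lockedE : @gmul_locked k = @gmul k.
Proof. by rewrite /gmul_locked unlock. Qed.

Lemma gmul_lockedA : associative (@gmul_locked k).
Proof. by rewrite gmul_lockedE; exact: gmulA. Qed.
Lemma gmul_locked1f : left_id (gone k) (@gmul_locked k).
Proof. by rewrite gmul_lockedE; exact: gmul1f. Qed.
Lemma gmul_lockedf1 : right_id (gone k) (@gmul_locked k).
Proof. by rewrite gmul_lockedE; exact: gmulf1. Qed.
Lemma gmul_lockedDl : left_distributive (@gmul_locked k) +%R.
Proof. by rewrite gmul_lockedE; exact: gmulDl. Qed.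
Lemma gmul_lockedDr : right_distributive (@gmul_locked k) +%R.
Proof. by rewrite gmul_lockedE; exact: gmulDr. Qed.

End GrassmannRing.

Definition grass (k : fieldType) : Type := Grass k.
HB.instance Definition _ (k : fieldType) := GRing.Zmodule.on (grass k).
HB.instance Definition _ (k : fieldType) := GRing.Zmodule_isNzRing.Build (grass k)
  (@gmul_lockedA k) (@gmul_locked1f k) (@gmul_lockedf1 k) (@gmul_lockedDl k)
  (@gmul_lockedDr k) (@gone_neq0 k).

Section GrassmannParity.
Variable k : fieldType.
Local Notation R := (grass k).
Local Notation gsign := (gsign k).
Local Open Scope fset_scope.
Local Open Scope ring_scope.
Implicit Types (x y : R) (A B S : {fset nat}).

Definition geven x : R := [malg S in msupp x => if odd #|` S| then 0 else x@_S].
Definition godd x : R := [malg S in msupp x => if odd #|` S| then x@_S else 0].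
Definition homog (b : bool) x := forall S, odd #|` S| != b -> x@_S = 0.

Lemma gevenE x S : (geven x)@_S = if odd #|` S| then 0 else x@_S.
Proof. by rewrite mcoeffE; case: msuppP => //; case: ifP. Qed.

Lemma goddE x S : (godd x)@_S = if odd #|` S| then x@_S else 0.
Proof. by rewrite mcoeffE; case: msuppP => //; case: ifP. Qed.

Lemma geven_add_godd x : geven x + godd x = x.
Proof.
by apply/malgP => S; rewrite mcoeffD gevenE goddE; case: ifP; rewrite ?add0r ?addr0.
Qed.

Lemma gevenD x y : geven (x + y) = geven x + geven y.
Proof. by apply/malgP => S; rewrite mcoeffD !gevenE mcoeffD; case: ifP; rewrite ?addr0. Qed.

Lemma goddD x y : godd (x + y) = godd x + godd y.
Proof. by apply/malgP => S; rewrite mcoeffD !goddE mcoeffD; case: ifP; rewrite ?addr0. Qed.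

Lemma homog_geven x : homog false (geven x).
Proof. by move=> S; rewrite gevenE; case: ifP. Qed.

Lemma homog_godd x : homog true (godd x).
Proof. by move=> S; rewrite goddE; case: ifP. Qed.

Lemma geven_homog b x : homog b x -> geven x = if b then 0 else x.
Proof.
case: b => hx; apply/malgP => S; rewrite gevenE ?mcoeff0.
  by case: ifP => // oS; rewrite hx ?oS.
by case: ifP => // oS; rewrite hx ?oS.
Qed.

Lemma godd_homog b x : homog b x -> godd x = if b then x else 0.
Proof.
case: b => hx; apply/malgP => S; rewrite goddE ?mcoeff0.
  by case: ifP => // oS; rewrite hx ?oS.
by case: ifP => // oS; rewrite hx ?oS.
Qed.

Lemma mulgE x y : x * y =
  \sum_(A <- msupp x) \sum_(B <- msupp y) << x@_A * y@_B * gsign A B *g A `|` B >>.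
Proof. by change (gmul_locked x y = gmul x y); rewrite gmul_lockedE. Qed.

Lemma homogM a b x y : homog a x -> homog b y -> homog (a (+) b) (x * y).
Proof.
move=> hx hy S hS; rewrite mulgE !raddf_sum big1 // => A _; rewrite raddf_sum big1 // => B _.
rewrite /= mcoeffU; case: eqP => // eS; rewrite mulr1n.
have [oA|oA] := eqVneq (odd #|` A|) a; last by rewrite hx // !mul0r.
have [oB|oB] := eqVneq (odd #|` B|) b; last by rewrite hy // mulr0 mul0r.
rewrite /gsign; case: ifP => dAB; last by rewrite mulr0.
move: hS; rewrite -eS cardfsU (disjoint_fsetI0 dAB) cardfs0 subn0 oddD oA oB.
by rewrite eqxx.
Qed.

Lemma homog_central x : homog false x -> central x.
Proof.
move=> hx y; rewrite !mulgE [RHS]exchange_big /=; apply: eq_bigr => A _.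
apply: eq_bigr => B _; rewrite fsetUC; congr (<< _ *g _ >>).
have [oA|oA] := boolP (odd #|` A|); first by rewrite hx ?oA //; ring.
by rewrite (gsignC k A B) -signr_odd oddM (negbTE oA) /= mul1r; ring.
Qed.

Lemma homog_anticomm x y : homog true x -> homog true y -> x * y = - (y * x).
Proof.
move=> hx hy; rewrite !mulgE exchange_big /= -sumrN; apply: eq_bigr => A _.
rewrite -sumrN; apply: eq_bigr => B _; rewrite fsetUC -monalgUN; congr (<< _ *g _ >>).
have [oA|oA] := boolP (odd #|` A|); last by rewrite hy ?(negbTE oA) //; ring.
have [oB|oB] := boolP (odd #|` B|); last by rewrite hx ?(negbTE oB) //; ring.
by rewrite (gsignC k B A) -signr_odd oddM oA oB /= expr1; ring.
Qed.

Lemma geven_central x : central (geven x).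
Proof. exact/homog_central/homog_geven. Qed.

Lemma godd_anticomm x y : godd x * godd y = - (godd y * godd x).
Proof. exact: homog_anticomm (homog_godd x) (homog_godd y). Qed.

Lemma gevenM x y : geven (x * y) = geven x * geven y + godd x * godd y.
Proof.
rewrite -{1}(geven_add_godd x) -{1}(geven_add_godd y) mulrDl !mulrDr !gevenD.
have hee := homogM (homog_geven x) (homog_geven y).
have hoo := homogM (homog_godd x) (homog_godd y).
have heo := homogM (homog_geven x) (homog_godd y).
have hoe := homogM (homog_godd x) (homog_geven y).
by rewrite (geven_homog hee) (geven_homog hoo) (geven_homog heo) (geven_homog hoe) addr0 add0r.
Qed.

Lemma goddM x y : godd (x * y) = geven x * godd y + godd x * geven y.
Proof.
rewrite -{1}(geven_add_godd x) -{1}(geven_add_godd y) mulrDl !mulrDr !goddD.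
have hee := homogM (homog_geven x) (homog_geven y).
have hoo := homogM (homog_godd x) (homog_godd y).
have heo := homogM (homog_geven x) (homog_godd y).
have hoe := homogM (homog_godd x) (homog_geven y).
by rewrite (godd_homog hee) (godd_homog hoo) (godd_homog heo) (godd_homog hoe) addr0 add0r.
Qed.

Lemma pchar_grass p : p \in [pchar k] -> p \in [pchar R].
Proof.
move=> charp; rewrite inE (pcharf_prime charp) /=; apply/eqP/malgP => S.
rewrite mcoeffMn mcoeff0 (_ : (1 : R)@_S = 1 *+ (fset0 == S)); last exact: mcoeffU.
by rewrite mulrnAC (pcharf0 charp) mul0rn.
Qed.

End GrassmannParity.

Lemma wmE (k : fieldType) p m (u : nat -> FA k) : wm p m u = wprod p m u.
Proof. by rewrite wprodE. Qed.

Lemma eq_wm (k : fieldType) p m (u v : nat -> FA k) :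
  (forall j, (0 < j)%N -> u j = v j) -> wm p m u = wm p m v.
Proof. by move=> uv; rewrite !wmE; apply: eq_wprod. Qed.

Lemma wm_fupd_id (k : fieldType) p m (u : nat -> FA k) i :
  wm p m (fupd u i (u i)) = wm p m u.
Proof. by apply: eq_wm => j _; rewrite fupd_id. Qed.

Section UnitalHom.
Variables (k : fieldType) (psi : FA k -> Grass k).
Hypothesis psi_hom : is_unital_hom_G psi.
Local Notation ps := (psi : FA k -> grass k).

Lemma psiD : {morph ps : f g / f + g}.
Proof. by case: psi_hom. Qed.

Lemma psiB : {morph ps : f g / f - g}.
Proof.
have psi0 : ps 0 = 0 by apply: (@addrI _ (ps 0)); rewrite -psiD !addr0.
by move=> f g; rewrite psiD; congr (_ + _); apply/eqP; rewrite -addr_eq0 -psiD addNr psi0.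
Qed.

Lemma psiM : {morph ps : f g / f * g}.
Proof.
move=> f g; change (ps (f * g) = gmul_locked (ps f) (ps g)).
by rewrite gmul_lockedE; case: psi_hom.
Qed.

Lemma psi1 : ps 1 = 1.
Proof. by case: psi_hom. Qed.

End UnitalHom.

Section Renaming.
Variables (k : fieldType) (sg : nat -> nat).
Local Notation FA := (FA k).

Lemma malgC_central (c : k) : central (c%:MP : FA).
Proof.
move=> x; rewrite mul_malgC malgM_def fgmulgU malgZ_def /fgscale.
by apply: eq_bigr => m _; rewrite mulm1 mulrC.
Qed.

Definition rename_monom (m : fmonom nat) : FA := << FMonom (map sg m) >>.

Lemma rename_monom_is_mmorphism : mmorphism rename_monom.
Proof.
have fmoneE' : (mone : fmonom nat) = FMonom [::] by exact: fmoneE.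
split=> [m1 m2|]; last by rewrite /rename_monom fmoneE' /= -fmoneE'.
rewrite /rename_monom malgM_def fgmulUU mulr1.
by rewrite !(fmmulE (I := nat) : forall a b, mmul a b = _) /= map_cat.
Qed.

HB.instance Definition _ :=
  isMultiplicative.Build _ _ rename_monom rename_monom_is_mmorphism.

Definition rename : FA -> FA := mmap (malgC : k -> FA) rename_monom.

Lemma rename_is_multiplicative : multiplicative rename.
Proof. by apply: commr_mmap_is_multiplicative => f m m'; apply: malgC_central. Qed.

Lemma renameM : {morph rename : f g / f * g}.
Proof. exact: rename_is_multiplicative.1. Qed.

Lemma renameB : {morph rename : f g / f - g}.
Proof. exact: mmapB. Qed.

Lemma rename1 : rename 1 = 1.
Proof. exact: rename_is_multiplicative.2. Qed.

Lemma rename_xv i : rename (xv k i) = xv k (sg i).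
Proof.
rewrite /rename /xv mmapU /rename_monom.
change ((1 : k)%:MP * << FMonom (map sg (fmu i)) >> = xv k (sg i)).
by rewrite mpolyC1E mul1r /xv !fmuE.
Qed.

Lemma rename_k0 f : in_k0 f -> in_k0 (rename f).
Proof.
rewrite /in_k0 /rename mmapE => f0; rewrite raddf_sum big1 // => m _.
change (((f@_m)%:MP * rename_monom m : FA)@_(fmone nat) = 0).
rewrite mcoeffCM /rename_monom mcoeffU.
have [->|ne] := eqVneq m (fmone nat); first by rewrite f0 mul0r.
case: eqP => [e|]; last by rewrite mulr0.
by move: ne e; rewrite fmoneE; case: m => [[|a s]].
Qed.

Lemma rename_endo0 : is_endo0 rename.
Proof.
split=> [|f g _ _|a f _|f g _ _]; [exact: rename_k0|exact: mmapD| |exact: renameM].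
by rewrite /rename mmapZ mul_malgC.
Qed.

End Renaming.

Section Closure.
Variables (k : fieldType) (H : FA k -> Prop).

Lemma S0closure_endo h phi : H h -> is_endo0 phi -> S0closure H (phi h).
Proof. by move=> Hh phi_endo V _ HV Vendo; apply: Vendo (HV h Hh). Qed.

Lemma S0closureD f g : S0closure H f -> S0closure H g -> S0closure H (f + g).
Proof.
move=> Hf Hg V Vsub HV Vendo; have [_ _ VD _] := Vsub.
by apply: VD; [apply: Hf | apply: Hg].
Qed.

End Closure.

Lemma S0closure_rename (k : fieldType) p m (sg : nat -> nat) :
  S0closure (fun h => exists j : nat, h = xv k 0 ^+ p * w k p j)
    (xv k (sg 0%N) ^+ p * wm p m (xv k \o sg)).
Proof.
have rename_wm :
    rename sg (xv k 0 ^+ p * w k p m) = xv k (sg 0%N) ^+ p * wm p m (xv k \o sg).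
  rewrite renameM (morphX (renameM sg) (rename1 _ sg)) rename_xv /w !wmE.
  rewrite (wprod_morph p (renameM sg) (rename1 _ sg) (renameB sg)).
  suff -> : wprod p m (rename sg \o xv k) = wprod p m (xv k \o sg) by [].
  by apply: eq_wprod => j _ /=; rewrite rename_xv.
suff: S0closure (fun h => exists j : nat, h = xv k 0 ^+ p * w k p j)
    (rename sg (xv k 0 ^+ p * w k p m)) by rewrite rename_wm.
exact: S0closure_endo (ex_intro _ m erefl) (rename_endo0 k sg).
Qed.

Lemma TG_wm_updM (k : fieldType) p m i (u : nat -> FA k) y z :
  p \in [pchar k] -> (2 < p)%N -> (1 <= i <= 2 * m)%N ->
  TG (wm p m (fupd u i (y * z)) -
      (y ^+ p * wm p m (fupd u i z) + z ^+ p * wm p m (fupd u i y))).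
Proof.
move=> charp p_gt2 i_in psi psi_hom; apply/eqP.
rewrite (psiB psi_hom) subr_eq0 !wmE; apply/eqP.
exact: (morph_wprod_updM (@geven_add_godd k) (@geven_central k) (@godd_anticomm k)
  (@gevenM k) (@goddM k) (pchar_grass charp) p_gt2
  (psiD psi_hom) (psiM psi_hom) (psi1 psi_hom) (psiB psi_hom)).
Qed.

Lemma wm_updZ (k : fieldType) p m i (u : nat -> FA k) (c : k) y :
  (0 < p)%N -> (1 <= i <= 2 * m)%N ->
  wm p m (fupd u i (c *: y)) = c ^+ p *: wm p m (fupd u i y).
Proof.
move=> p_gt0 i_in; rewrite !wmE -!mul_malgC rmorphXn.
apply: (wprod_upd_scale _ i_in (centralX _ (malgC_central c))) => x.
  exact: kap_centralMl p_gt0 _ _ _ (malgC_central c).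
exact: kap_centralMr p_gt0 _ _ _ (malgC_central c).
Qed.

Theorem lemma3p4 (k : fieldType) (p : nat) (charp : p \in [pchar k])
  (p_gt2 : (2 < p)%N) (m : nat) (m_ge1 : (1 <= m)%N) :
  (forall i : nat, (1 <= i <= 2 * m)%N ->
     exists g t : FA k,
       S0closure (fun h => exists j : nat, h = xv k 0 ^+ p * w k p j) g /\
       TG t /\
       wm p m (fun j => if j == i then xv k i * xv k (2 * m).+1 else xv k j)
         = g + t) /\
  (forall (i : nat) (alpha : k), (1 <= i <= 2 * m)%N ->
     wm p m (fun j => if j == i then alpha *: xv k i else xv k j)
       = alpha ^+ p *: w k p m).
Proof.
have p_gt0 : (0 < p)%N by apply: ltn_trans p_gt2.
split=> [i i_in | i alpha i_in]; last first.
  change (wm p m (fupd (xv k) i (alpha *: xv k i)) = alpha ^+ p *: w k p m).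
  rewrite (wm_updZ (xv k) alpha (xv k i) p_gt0 i_in).
  by rewrite (wm_fupd_id p m (xv k) i).
rewrite -/(fupd (xv k) i (xv k i * xv k (2 * m).+1)).
pose sg1 := fupd (fupd id i (2 * m).+1) 0 i; pose sg2 := fupd id 0 (2 * m).+1.
have wm_sg1 : wm p m (xv k \o sg1) = wm p m (fupd (xv k) i (xv k (2 * m).+1)).
  by apply: eq_wm => j j_gt0; rewrite /= /sg1 /fupd (gtn_eqF j_gt0); case: eqP.
have wm_sg2 : wm p m (xv k \o sg2) = w k p m.
  by apply: eq_wm => j j_gt0; rewrite /= /sg2 /fupd (gtn_eqF j_gt0).
pose g := xv k i ^+ p * wm p m (fupd (xv k) i (xv k (2 * m).+1)) +
  xv k (2 * m).+1 ^+ p * w k p m.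
exists g, (wm p m (fupd (xv k) i (xv k i * xv k (2 * m).+1)) - g).
split; [|split].
- apply: S0closureD.
    by have := @S0closure_rename k p m sg1; rewrite wm_sg1; exact: id.
  by have := @S0closure_rename k p m sg2; rewrite wm_sg2; exact: id.
- have := TG_wm_updM (xv k) (xv k i) (xv k (2 * m).+1) charp p_gt2 i_in.
  by rewrite (wm_fupd_id p m (xv k) i); exact: id.
- exact/esym/subrKC.
Qed.
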